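(* Let $\mathcal J$ be a generalized almost complex structure on a Courant algebroid $E$. (i) The endomorphism $\Pi_{\mathcal J}$ of $\Lambda^3E^*$ defined by $$(\Pi_{\mathcal J}\alpha)(u,v,w)=\tfrac14\big(\alpha(u,v,w)-\alpha(u,\mathcal Jv,\mathcal Jw)-\alpha(\mathcal Ju,v,\mathcal Jw)-\alpha(\mathcal Ju,\mathcal Jv,w)\big)$$ is a projector (i.e. $\Pi_{\mathcal J}^2=\Pi_{\mathcal J}$) with image the subbundle $\Lambda^3_{\mathcal J}E^*=\{\alpha\in\Lambda^3E^*:\alpha(\mathcal Ju,v,w)=\alpha(u,\mathcal Jv,w)=\alpha(u,v,\mathcal Jw)\ \forall u,v,w\}$. (ii) $\mathrm{im}\,\partial_{\mathcal J}=\ker\Pi_{\mathcal J}$.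
   Context: A Courant algebroid is a real vector bundle $E\to M$ with a nondegenerate symmetric bilinear form $\langle\cdot,\cdot\rangle$, a Dorfman bracket and an anchor satisfying the Courant algebroid axioms; only the bundle $E$ with $\langle\cdot,\cdot\rangle$ matters here. A generalized almost complex structure is a $\langle\cdot,\cdot\rangle$-orthogonal endomorphism $\mathcal J$ of $E$ with $\mathcal J^2=-\mathrm{Id}$. $\Lambda^{1,1}_{\mathcal J}E^*$ is the bundle of 2-forms $\beta$ on $E$ with $\beta(\mathcal Ju,\mathcal Jv)=\beta(u,v)$. Elements $\eta\in E^*\otimes\Lambda^{1,1}_{\mathcal J}E^*$ are written $\eta(u,v,w)$ (a 2-form in $(v,w)$ for each $u$), and $\partial_{\mathcal J}:E^*\otimes\Lambda^{1,1}_{\mathcal J}E^*\to\Lambda^3E^*$ is $(\partial_{\mathcal J}\eta)(u,v,w)=\eta(u,v,w)+\eta(w,u,v)+\eta(v,w,u)$. *)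

(* Fibrewise linear algebra on one fibre V of the Courant
   algebroid E (a finite-dimensional real vector space). *)
From HB Require Import structures.
From mathcomp Require Import all_boot all_order all_algebra.
From mathcomp Require Import reals.
Set Implicit Arguments. Unset Strict Implicit. Unset Printing Implicit Defensive.
Import Order.TTheory GRing.Theory Num.Theory.
Local Open Scope ring_scope.

Section Defs.
Variables (R : realType) (V : vectType R).

Definition courant_form (g : V -> V -> R) : Prop :=
  [/\ (forall c x y v, g (c *: x + y) v = c * g x v + g y v),
      (forall u v, g u v = g v u) &
      (forall u, (forall v, g u v = 0) -> u = 0)].

Definition gen_almost_complex (g : V -> V -> R) (J : {linear V -> V}) : Prop :=
  (forall u v, g (J u) (J v) = g u v) /\ (forall u, J (J u) = - u).

Definition is_2form (b : V -> V -> R) : Prop :=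
  [/\ (forall c x y v, b (c *: x + y) v = c * b x v + b y v),
      (forall c u x y, b u (c *: x + y) = c * b u x + b u y) &
      (forall u, b u u = 0)].

Definition Lambda11 (J : {linear V -> V}) (b : V -> V -> R) : Prop :=
  is_2form b /\ forall u v, b (J u) (J v) = b u v.

(* E^* (x) Lambda^{1,1}_J E^* : eta u is in Lambda^{1,1} for each u, linear in u *)
Definition in_E_Lambda11 (J : {linear V -> V}) (eta : V -> V -> V -> R) : Prop :=
  (forall c x y v w, eta (c *: x + y) v w = c * eta x v w + eta y v w) /\
  (forall u, Lambda11 J (eta u)).

Definition is_3form (a : V -> V -> V -> R) : Prop :=
  [/\ (forall c x y v w, a (c *: x + y) v w = c * a x v w + a y v w),
      (forall c u x y w, a u (c *: x + y) w = c * a u x w + a u y w),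
      (forall c u v x y, a u v (c *: x + y) = c * a u v x + a u v y),
      (forall u w, a u u w = 0) &
      (forall u v, a u v v = 0)].

Definition Lambda3J (J : {linear V -> V}) (a : V -> V -> V -> R) : Prop :=
  is_3form a /\
  forall u v w, a (J u) v w = a u (J v) w /\ a u (J v) w = a u v (J w).

Definition PiJ (J : {linear V -> V}) (a : V -> V -> V -> R) : V -> V -> V -> R :=
  fun u v w => 4^-1 * (a u v w - a u (J v) (J w) - a (J u) v (J w)
                       - a (J u) (J v) w).

Definition dJ (eta : V -> V -> V -> R) : V -> V -> V -> R :=
  fun u v w => eta u v w + eta w u v + eta v w u.

End Defs.

(* With J^2 = -1, the maps B1 a = - a(., J., J.), B2 a = - a(J., ., J.) and
   B3 a = - a(J., J., .) are commuting involutions of the space of 3-forms with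
   B1 B2 = B3, i.e. a Klein four-group, and Pi_J = (1 + B1 + B2 + B3)/4 is the
   averaging projector onto its invariants, which form Lambda^3_J.  For eta in
   E^* (x) Lambda^{1,1}_J the terms of Pi_J (d_J eta) cancel in pairs, because
   eta(u, J v, w) = - eta(u, v, J w).  Conversely eta := (a - B1 a)/4 lies in
   E^* (x) Lambda^{1,1}_J and, by cyclic symmetry of a, d_J eta = a - Pi_J a. *)
From HB Require Import structures.
From mathcomp Require Import all_boot all_order all_algebra.
From mathcomp Require Import reals.
From mathcomp Require Import boolp ring lra.
Set Implicit Arguments. Unset Strict Implicit. Unset Printing Implicit Defensive.
Import Order.TTheory GRing.Theory Num.Theory.
Local Open Scope ring_scope.

Section Multilinear.
Variables (R : realType) (V : vectType R).

Section ScalarLinear.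
Variable f : V -> R.
Hypothesis f_lin : forall c x y, f (c *: x + y) = c * f x + f y.

Lemma scalar_lin0 : f 0 = 0.
Proof. by have := f_lin 1 0 0; rewrite scale1r addr0 mul1r; lra. Qed.

Lemma scalar_linN x : f (- x) = - f x.
Proof. by have := f_lin (-1) x 0; rewrite addr0 scalar_lin0 addr0 scaleN1r mulN1r. Qed.

Lemma scalar_linD x y : f (x + y) = f x + f y.
Proof. by have := f_lin 1 x y; rewrite scale1r mul1r. Qed.

End ScalarLinear.

Section TwoForm.
Variable b : V -> V -> R.
Hypothesis b2 : is_2form b.

Lemma form2N1 x y : b (- x) y = - b x y.
Proof.
case: b2 => lin1 _ _.
exact: (@scalar_linN (b^~ y) (fun c x' x'' => lin1 c x' x'' y)).
Qed.

Lemma form2_skew x y : b x y = - b y x.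
Proof.
case: b2 => lin1 lin2 alt; have := alt (x + y).
by rewrite (@scalar_linD (b^~ _) (fun c x' x'' => lin1 c x' x'' _))
  !(@scalar_linD (b _) (fun c => lin2 c _)) !alt; lra.
Qed.

End TwoForm.

Section ThreeForm.
Variable a : V -> V -> V -> R.
Hypothesis a3 : is_3form a.

Lemma form3N1 x y z : a (- x) y z = - a x y z.
Proof.
case: a3 => lin1 _ _ _ _.
exact: (@scalar_linN (fun t => a t y z) (fun c x' x'' => lin1 c x' x'' y z)).
Qed.

Lemma form3N2 x y z : a x (- y) z = - a x y z.
Proof.
case: a3 => _ lin2 _ _ _.
exact: (@scalar_linN (a x^~ z) (fun c y' y'' => lin2 c x y' y'' z)).
Qed.

Lemma form3N3 x y z : a x y (- z) = - a x y z.
Proof.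
by case: a3 => _ _ lin3 _ _; exact: (@scalar_linN (a x y) (fun c => lin3 c x y)).
Qed.

Lemma form3_skew12 x y z : a x y z = - a y x z.
Proof.
case: a3 => lin1 lin2 _ alt12 _; have := alt12 (x + y) z.
by rewrite (@scalar_linD (fun t => a t _ z) (fun c x' x'' => lin1 c x' x'' _ z))
  !(@scalar_linD (a _^~ z) (fun c y' y'' => lin2 c _ y' y'' z)) !alt12; lra.
Qed.

Lemma form3_skew23 x y z : a x y z = - a x z y.
Proof.
case: a3 => _ lin2 lin3 _ alt23; have := alt23 x (y + z).
by rewrite (@scalar_linD (a x _) (fun c => lin3 c x _))
  !(@scalar_linD (a x^~ _) (fun c y' y'' => lin2 c x y' y'' _)) !alt23; lra.
Qed.

Lemma form3_cycle x y z : a x y z = a y z x.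
Proof. by rewrite form3_skew12 form3_skew23 opprK. Qed.

End ThreeForm.

End Multilinear.

Section AlmostComplex.
Variables (R : realType) (V : vectType R) (J : {linear V -> V}).
Hypothesis JJ : forall u, J (J u) = - u.

Lemma is_3form_PiJ a : is_3form a -> is_3form (PiJ J a).
Proof.
move=> a3; have [lin1 lin2 lin3 alt12 alt23] := a3; rewrite /PiJ; split.
- by move=> c x y v w; rewrite !linearP /= !lin1; ring.
- by move=> c x y v w; rewrite !linearP /= !lin2; ring.
- by move=> c x y v w; rewrite !linearP /= !lin3; ring.
- by move=> u w; rewrite !alt12 (form3_skew12 a3 u); lra.
- by move=> u v; rewrite !alt23 (form3_skew23 a3 (J u) v); lra.
Qed.

Lemma PiJ_pairJN a u v w : is_3form a ->
  [/\ PiJ J a u (J v) (J w) = - PiJ J a u v w,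
      PiJ J a (J u) v (J w) = - PiJ J a u v w &
      PiJ J a (J u) (J v) w = - PiJ J a u v w].
Proof.
by move=> a3; rewrite /PiJ !JJ !(form3N1 a3, form3N2 a3, form3N3 a3); split; lra.
Qed.

Lemma Lambda3J_PiJ a : is_3form a -> Lambda3J J (PiJ J a).
Proof.
move=> a3; split; first exact: is_3form_PiJ.
move=> u v w; have [e1 e2 _] := PiJ_pairJN u v (J w) a3.
by move: e1 e2; rewrite JJ !(form3N3 (is_3form_PiJ a3)); split; lra.
Qed.

Lemma PiJ_Lambda3J a u v w : Lambda3J J a -> PiJ J a u v w = a u v w.
Proof.
case=> a3 aJ.
have e1 : a u (J v) (J w) = - a u v w.
  by case: (aJ u v (J w)) => _ ->; rewrite JJ form3N3.
have e2 : a (J u) v (J w) = - a u v w.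
  by case: (aJ u v (J w)) => -> _; rewrite e1.
have e3 : a (J u) (J v) w = - a u v w.
  by case: (aJ u (J v) w) => ->; rewrite JJ form3N2.
by rewrite /PiJ e1 e2 e3; lra.
Qed.

Lemma PiJ_idem a u v w : is_3form a -> PiJ J (PiJ J a) u v w = PiJ J a u v w.
Proof. by move=> a3; apply: PiJ_Lambda3J; exact: Lambda3J_PiJ. Qed.

Section DJ.
Variable eta : V -> V -> V -> R.
Hypothesis eta11 : in_E_Lambda11 J eta.

Lemma Lambda11_moveJ u y z : eta u (J y) z = - eta u y (J z).
Proof.
have [eta2 etaJ] := eta11.2 u.
by rewrite -(etaJ (J y)) JJ form2N1.
Qed.

Lemma is_3form_dJ : is_3form (dJ eta).
Proof.
have [lin1 eta2] := eta11; rewrite /dJ; split.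
- move=> c x y v w; have [[linw _ _] _] := eta2 w; have [[_ linv _] _] := eta2 v.
  by rewrite lin1 linw linv; ring.
- move=> c u x y w; have [[linu _ _] _] := eta2 u; have [[_ linw _] _] := eta2 w.
  by rewrite linu linw !lin1; ring.
- move=> c u v x y; have [[_ linu _] _] := eta2 u; have [[linv _ _] _] := eta2 v.
  by rewrite linu linv !lin1; ring.
- move=> u w; have [[_ _ altw] _] := eta2 w.
  by rewrite altw (form2_skew (eta2 u).1); lra.
- move=> u v; have [[_ _ altu] _] := eta2 u.
  by rewrite altu (form2_skew (eta2 v).1); lra.
Qed.

Lemma PiJ_dJ u v w : PiJ J (dJ eta) u v w = 0.
Proof.
have etaJ u := (eta11.2 u).2.
rewrite /PiJ /dJ !etaJ (Lambda11_moveJ (J w) u v) (Lambda11_moveJ (J v) w u).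
rewrite (Lambda11_moveJ (J u) v w).
lra.
Qed.

End DJ.

Definition dJ_lift (a : V -> V -> V -> R) : V -> V -> V -> R :=
  fun u v w => 4^-1 * (a u v w + a u (J v) (J w)).

Lemma in_E_Lambda11_dJ_lift a : is_3form a -> in_E_Lambda11 J (dJ_lift a).
Proof.
move=> a3; have [lin1 lin2 lin3 _ alt23] := a3; rewrite /dJ_lift; split.
  by move=> c x y v w; rewrite !lin1; ring.
move=> u; split; last by move=> v w; rewrite !JJ form3N2 // form3N3 // opprK; ring.
split.
- by move=> c x y v; rewrite !linearP /= !lin2; ring.
- by move=> c u' x y; rewrite !linearP /= !lin3; ring.
- by move=> v; rewrite !alt23; ring.
Qed.

Lemma dJ_dJ_lift a u v w : is_3form a ->
  dJ (dJ_lift a) u v w = a u v w - PiJ J a u v w.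
Proof.
move=> a3; rewrite /dJ /dJ_lift /PiJ.
rewrite (form3_cycle a3 w u v) -(form3_cycle a3 u v w).
rewrite (form3_cycle a3 w (J u) (J v)) -(form3_cycle a3 (J u) v (J w)).
lra.
Qed.

Lemma im_dJ_ker_PiJ a :
  (exists eta, in_E_Lambda11 J eta /\ forall u v w, dJ eta u v w = a u v w) <->
  (is_3form a /\ forall u v w, PiJ J a u v w = 0).
Proof.
split.
- case=> eta [eta11 dJeta].
  have -> : a = dJ eta by apply/funext => u; apply/funext => v; apply/funext => w.
  by split; [exact: is_3form_dJ | exact: PiJ_dJ].
- case=> a3 PiJa0; exists (dJ_lift a); split; first exact: in_E_Lambda11_dJ_lift.
  by move=> u v w; rewrite dJ_dJ_lift // PiJa0 subr0.
Qed.

End AlmostComplex.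

Theorem lemma3p1 (R : realType) (V : vectType R) (g : V -> V -> R)
    (J : {linear V -> V}) :
  courant_form g -> gen_almost_complex g J ->
  [/\ (forall a, is_3form a -> is_3form (PiJ J a)),
      (forall a, is_3form a ->
         forall u v w, PiJ J (PiJ J a) u v w = PiJ J a u v w),
      (forall a, is_3form a -> Lambda3J J (PiJ J a)),
      (forall a, Lambda3J J a ->
         exists b, is_3form b /\ forall u v w, PiJ J b u v w = a u v w) &
      (forall a,
         (exists eta, in_E_Lambda11 J eta /\
                      forall u v w, dJ eta u v w = a u v w) <->
         (is_3form a /\ forall u v w, PiJ J a u v w = 0))].
Proof.
move=> _ [_ JJ]; split.
- exact: is_3form_PiJ.
- by move=> a a3 u v w; exact: PiJ_idem.
- exact: Lambda3J_PiJ.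
- move=> a aJ; exists a; split; first exact: aJ.1.
  by move=> u v w; exact: PiJ_Lambda3J.
- exact: im_dJ_ker_PiJ.
Qed.
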